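(* For every $z\in\mathbb{C}$ with $|z|>1$, $$\sum_{n=0}^{\infty}\frac{(-1)^{m_n}}{p_n(z)}=1-\frac1z .$$
   Context: For $n\ge0$ and $z\in\mathbb{C}$, $p_n(z)=\frac12\sum_{i=0}^{n}\left(1-(-1)^{\binom{n}{i}}\right)z^i$, i.e. the sum of $z^i$ over those $i\in\{0,\dots,n\}$ with $\binom{n}{i}$ odd. $(m_n)_{n\ge0}=0,1,1,0,1,0,0,1,\dots$ is the Thue–Morse sequence: $m_n\equiv s(n)\pmod 2$, where $s(n)$ is the number of $1$'s in the binary expansion of $n$. *)

From Stdlib Require Import Reals Arith List.
Import ListNotations.
From Coquelicot Require Import Coquelicot.
Open Scope C_scope.

Fixpoint binom (n k : nat) : nat :=
  match n, k with
  | _, O => 1%nat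
  | O, S _ => 0%nat
  | S n', S k' => (binom n' k' + binom n' k)%nat
  end.

(* number of 1's in the binary expansion of n (fuel n suffices) *)
Fixpoint bitcount_aux (fuel n : nat) : nat :=
  match fuel with
  | O => 0%nat
  | S f => match n with
           | O => 0%nat
           | _ => (Nat.b2n (Nat.odd n) + bitcount_aux f (Nat.div2 n))%nat
           end
  end.
Definition bitcount (n : nat) : nat := bitcount_aux n n.

Definition thue_morse (n : nat) : nat := (bitcount n mod 2)%nat.

Definition tm_sign (n : nat) : C := if Nat.eqb (thue_morse n) 0 then RtoC 1 else RtoC (-1).

Definition p_poly (n : nat) (z : C) : C :=
  sum_n (fun i : nat => if Nat.odd (binom n i) then Cpow z i else RtoC 0) n.

Example tm_test : map thue_morse (seq 0 8) = [0;1;1;0;1;0;0;1]%nat%list. Proof. reflexivity. Qed.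
Example binom_test : binom 5 2 = 10%nat. Proof. reflexivity. Qed.

From Stdlib Require Import Reals Arith Lia Lra Btauto.
From Coquelicot Require Import Coquelicot.
Open Scope C_scope.

(* Write [a_n = (-1)^(m_n) / p_n(z)] and [w_K = z^(2^K)].  For [m < 2^K], Lucas' theorem
   gives [p_(m+2^K) = (1 + w_K) p_m], and [m_(m+2^K) = 1 - m_m], so
   [a_(m+2^K) = - a_m / (1 + w_K)].  The partial sums [S_N = a_0 + ... + a_(N-1)] thus
   satisfy [S_(2^K+m) = S_(2^K) - S_m / (1 + w_K)] for [m <= 2^K]; this telescopes to
   [S_(2^K) = (1 - 1/z) w_K / (w_K - 1)] and bounds [|S_N|] uniformly.  Since
   [|w_K +- 1| >= 2^K (|z| - 1)], the error [|S_N - (1 - 1/z)|] is [O(2^-K)] for [N >= 2^K]. *)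

Lemma binom_small (n k : nat) : (n < k)%nat -> binom n k = 0%nat.
Proof.
  revert k; induction n; intros k H; destruct k; simpl; try lia; auto.
  rewrite !IHn; lia.
Qed.

Lemma binom_n_0 (n : nat) : binom n 0 = 1%nat.
Proof. now destruct n. Qed.

Lemma odd_binom_0 (j : nat) : Nat.odd (binom 0 j) = Nat.eqb j 0.
Proof. now destruct j. Qed.

Definition odd_row_ends (a : nat) : Prop :=
  forall j, Nat.odd (binom a j) = (Nat.eqb j 0 || Nat.eqb j a)%bool.

(* Modulo 2, [(1 + X)^(n + a) = (1 + X)^n (1 + X^a)]. *)
Lemma odd_binom_add (a n i : nat) : (1 <= a)%nat -> odd_row_ends a ->
  Nat.odd (binom (n + a) i) =
  xorb (Nat.odd (binom n i)) (Nat.leb a i && Nat.odd (binom n (i - a))).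
Proof.
  intros Ha Hrow. revert i. induction n as [|n IH]; intros i.
  - simpl (0 + a)%nat. rewrite Hrow, !odd_binom_0.
    destruct (Nat.eqb_spec i 0), (Nat.eqb_spec i a), (Nat.leb_spec a i),
      (Nat.eqb_spec (i - a) 0); simpl; try reflexivity; lia.
  - destruct i as [|j].
    + simpl. now destruct (Nat.leb_spec a 0); [lia|].
    + simpl (S n + a)%nat. cbn [binom]. rewrite !Nat.odd_add, !IH.
      destruct (Nat.leb_spec a (S j)), (Nat.leb_spec a j); try lia.
      * replace (S j - a)%nat with (S (j - a)) by lia. cbn [binom].
        rewrite Nat.odd_add. replace (S (j - a)) with (S j - a)%nat by lia. btauto.
      * replace a with (S j) by lia. rewrite Nat.sub_diag, binom_n_0. simpl. btauto.
      * btauto.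
Qed.

Lemma pow2_ge_1 (K : nat) : (1 <= 2 ^ K)%nat.
Proof. apply Nat.le_succ_l, Nat.neq_0_lt_0, Nat.pow_nonzero; lia. Qed.

Lemma odd_row_ends_pow2 (K : nat) : odd_row_ends (2 ^ K).
Proof.
  induction K as [|K IH].
  - intros [|[|i]]; reflexivity.
  - intros j. rewrite Nat.pow_succ_r'.
    replace (2 * 2 ^ K)%nat with (2 ^ K + 2 ^ K)%nat by lia.
    pose proof (pow2_ge_1 K).
    rewrite (odd_binom_add _ _ j (pow2_ge_1 K) IH), !IH.
    destruct (Nat.eqb_spec j 0), (Nat.eqb_spec j (2 ^ K)), (Nat.leb_spec (2 ^ K) j),
      (Nat.eqb_spec (j - 2 ^ K) 0), (Nat.eqb_spec (j - 2 ^ K) (2 ^ K)),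
      (Nat.eqb_spec j (2 ^ K + 2 ^ K)); simpl; try reflexivity; lia.
Qed.

Lemma sum_n_Sl {G : AbelianMonoid} (f : nat -> G) (n : nat) :
  sum_n f (S n) = plus (f 0%nat) (sum_n (fun k => f (S k)) n).
Proof. unfold sum_n. rewrite sum_Sn_m by lia. now rewrite sum_n_m_S. Qed.

Lemma sum_n_pad {G : AbelianMonoid} (f : nat -> G) (m k : nat) :
  (forall i, (m < i)%nat -> f i = zero) -> sum_n f (m + k) = sum_n f m.
Proof.
  intros Hf. induction k as [|k IH].
  - now rewrite Nat.add_0_r.
  - rewrite Nat.add_succ_r, sum_Sn, IH, Hf by lia. apply plus_zero_r.
Qed.

Lemma sum_n_shift {G : AbelianMonoid} (g : nat -> G) (a m : nat) :
  sum_n (fun i => if Nat.leb a i then g (i - a)%nat else zero) (a + m) = sum_n g m.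
Proof.
  induction a as [|a IH].
  - apply sum_n_ext. intros i. now rewrite Nat.sub_0_r.
  - simpl (S a + m)%nat. rewrite sum_n_Sl. simpl. rewrite plus_zero_l. exact IH.
Qed.

Definition p_term (n : nat) (z : C) (i : nat) : C :=
  if Nat.odd (binom n i) then z ^ i else 0.

Lemma p_poly_pad (n k : nat) (z : C) : p_poly n z = sum_n (p_term n z) (n + k).
Proof.
  symmetry. apply sum_n_pad. intros i Hi. unfold p_term. now rewrite binom_small.
Qed.

Lemma p_term_add_pow2 (K m i : nat) (z : C) : (m < 2 ^ K)%nat ->
  p_term (m + 2 ^ K) z i =
  p_term m z i + (if Nat.leb (2 ^ K) i then z ^ (2 ^ K) * p_term m z (i - 2 ^ K) else 0).
Proof.
  intros Hm. unfold p_term.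
  rewrite (odd_binom_add _ _ i (pow2_ge_1 K) (odd_row_ends_pow2 K)).
  destruct (Nat.leb_spec (2 ^ K) i) as [Hi|Hi].
  - rewrite (binom_small m i) by lia. simpl.
    destruct (Nat.odd (binom m (i - 2 ^ K))); [|ring].
    replace i with (2 ^ K + (i - 2 ^ K))%nat at 1 by lia. rewrite Cpow_add_r. ring.
  - rewrite Bool.andb_false_l, Bool.xorb_false_r. ring.
Qed.

Lemma p_poly_add_pow2 (K m : nat) (z : C) : (m < 2 ^ K)%nat ->
  p_poly (m + 2 ^ K) z = (1 + z ^ (2 ^ K)) * p_poly m z.
Proof.
  intros Hm. set (a := (2 ^ K)%nat).
  unfold p_poly at 1. fold (p_term (m + a) z).
  rewrite (sum_n_ext _ _ _ (fun i => p_term_add_pow2 K m i z Hm)).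
  rewrite (sum_n_plus (p_term m z)), <- p_poly_pad, Nat.add_comm.
  rewrite (sum_n_shift (fun j => z ^ a * p_term m z j)).
  rewrite (sum_n_mult_l (z ^ a) (p_term m z)).
  change (p_poly m z + z ^ a * p_poly m z = (1 + z ^ a) * p_poly m z). ring.
Qed.

Lemma bitcount_aux_fuel (f g n : nat) : (n <= f)%nat -> (n <= g)%nat ->
  bitcount_aux f n = bitcount_aux g n.
Proof.
  revert g n. induction f as [|f IH]; intros g n Hf Hg.
  - replace n with 0%nat by lia. now destruct g.
  - destruct g as [|g]; [replace n with 0%nat by lia; reflexivity|].
    destruct n as [|n]; [reflexivity|]. cbn -[Nat.div2].
    f_equal. apply IH; apply Nat.div2_decr; lia.
Qed.

Lemma bitcount_div2 (n : nat) :
  bitcount n = (Nat.b2n (Nat.odd n) + bitcount (Nat.div2 n))%nat.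
Proof.
  destruct n as [|n]; [reflexivity|].
  unfold bitcount at 1. cbn -[Nat.div2 Nat.odd]. f_equal.
  apply bitcount_aux_fuel; [apply Nat.div2_decr; lia | apply le_n].
Qed.

Lemma bitcount_add_pow2 (K m : nat) : (m < 2 ^ K)%nat ->
  bitcount (m + 2 ^ K) = S (bitcount m).
Proof.
  revert m. induction K as [|K IH]; intros m Hm.
  - replace m with 0%nat by (simpl in Hm; lia). reflexivity.
  - rewrite Nat.pow_succ_r' in *. rewrite (bitcount_div2 (m + _)), (bitcount_div2 m).
    replace (Nat.odd (m + 2 * 2 ^ K)) with (Nat.odd m)
      by (rewrite Nat.odd_add, Nat.odd_mul; simpl; now destruct (Nat.odd m)).
    replace (Nat.div2 (m + 2 * 2 ^ K)) with (Nat.div2 m + 2 ^ K)%nat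
      by (rewrite !Nat.div2_div, Nat.mul_comm, Nat.div_add; lia).
    rewrite IH; [lia|]. rewrite Nat.div2_div. apply Nat.Div0.div_lt_upper_bound. lia.
Qed.

Lemma tm_sign_add_pow2 (K m : nat) : (m < 2 ^ K)%nat -> tm_sign (m + 2 ^ K) = - tm_sign m.
Proof.
  intros Hm. unfold tm_sign, thue_morse. rewrite bitcount_add_pow2 by exact Hm.
  set (b := bitcount m).
  assert (Hflip : (S b mod 2 = 1 - b mod 2)%nat).
  { pose proof (Nat.div_mod_eq b 2). pose proof (Nat.div_mod_eq (S b) 2).
    pose proof (Nat.mod_upper_bound b 2). pose proof (Nat.mod_upper_bound (S b) 2). lia. }
  rewrite Hflip.
  destruct (Nat.eqb_spec (b mod 2) 0) as [E|E];
    [rewrite E | replace (b mod 2)%nat with 1%nat by (pose proof (Nat.mod_upper_bound b 2); lia)];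
    apply injective_projections; simpl; ring.
Qed.

Lemma pow_pow2_ge (r : R) (K : nat) : (2 ^ K * (r - 1) <= r ^ (2 ^ K) - 1)%R.
Proof.
  induction K as [|K IH]; [simpl; lra|].
  rewrite Nat.pow_succ_r', Nat.mul_comm, pow_mult.
  set (y := (r ^ (2 ^ K))%R) in *. simpl. pose proof (Rle_0_sqr (y - 1)). unfold Rsqr in *. nra.
Qed.

Lemma Cmod_sub_1_ge (x : C) : (Cmod x - 1 <= Cmod (x - 1))%R.
Proof.
  pose proof (Cmod_triangle (x - 1) 1) as H. rewrite Cmod_1 in H.
  replace (x - 1 + 1) with x in H by ring. lra.
Qed.

Lemma Cmod_add_1_ge (x : C) : (Cmod x - 1 <= Cmod (1 + x))%R.
Proof.
  pose proof (Cmod_sub_1_ge (- x)) as H. rewrite Cmod_opp in H.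
  replace (- x - 1) with (- (1 + x)) in H by ring. now rewrite Cmod_opp in H.
Qed.

Lemma Cmod_gt_0_neq_0 (x : C) : (0 < Cmod x)%R -> x <> 0.
Proof. intros H ->. rewrite Cmod_0 in H. lra. Qed.

Lemma Cmod_1_sub_inv_le (x : C) : (1 < Cmod x)%R -> (Cmod (1 - / x) <= 2)%R.
Proof.
  intros Hx. pose proof (Cmod_triangle 1 (- / x)) as H.
  rewrite Cmod_opp, Cmod_1, Cmod_inv in H by (apply Cmod_gt_0_neq_0; lra).
  assert (Hinv : (/ Cmod x < / 1)%R) by (apply Rinv_lt_contravar; lra).
  rewrite Rinv_1 in Hinv. unfold Cminus. lra.
Qed.

Lemma exp_le_compat (x y : R) : (x <= y)%R -> (exp x <= exp y)%R.
Proof.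
  intros H. destruct (Rle_lt_or_eq_dec _ _ H) as [Hlt | ->]; [left; now apply exp_increasing | lra].
Qed.

Lemma pow2R_pos (K : nat) : (0 < 2 ^ K)%R.
Proof. apply pow_lt; lra. Qed.

Section Estimates.

Variable z : C.
Hypothesis hz : (1 < Cmod z)%R.

Lemma Cmod_pow2_pm1_ge (K : nat) :
  (2 ^ K * (Cmod z - 1) <= Cmod (1 + z ^ (2 ^ K)))%R /\
  (2 ^ K * (Cmod z - 1) <= Cmod (z ^ (2 ^ K) - 1))%R.
Proof.
  pose proof (pow_pow2_ge (Cmod z) K). rewrite <- Cmod_pow in *.
  pose proof (Cmod_add_1_ge (z ^ (2 ^ K))). pose proof (Cmod_sub_1_ge (z ^ (2 ^ K))).
  split; lra.
Qed.

Lemma dyadic_gap_pos (K : nat) : (0 < 2 ^ K * (Cmod z - 1))%R.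
Proof. apply Rmult_lt_0_compat; [apply pow2R_pos | lra]. Qed.

Lemma pow2_add_1_neq_0 (K : nat) : 1 + z ^ (2 ^ K) <> 0.
Proof.
  apply Cmod_gt_0_neq_0. pose proof (Cmod_pow2_pm1_ge K). pose proof (dyadic_gap_pos K). lra.
Qed.

Lemma pow2_sub_1_neq_0 (K : nat) : z ^ (2 ^ K) - 1 <> 0.
Proof.
  apply Cmod_gt_0_neq_0. pose proof (Cmod_pow2_pm1_ge K). pose proof (dyadic_gap_pos K). lra.
Qed.

Lemma p_poly_neq_0 (n : nat) : p_poly n z <> 0.
Proof.
  induction n as [n IH] using (well_founded_induction lt_wf).
  destruct n as [|n].
  - unfold p_poly. rewrite sum_O. simpl. apply Cmod_gt_0_neq_0. rewrite Cmod_1. lra.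
  - destruct (Nat.log2_spec (S n)) as [Hlo Hhi]; [lia|].
    set (K := Nat.log2 (S n)) in *. rewrite Nat.pow_succ_r' in Hhi.
    replace (S n) with ((S n - 2 ^ K) + 2 ^ K)%nat by lia.
    rewrite p_poly_add_pow2 by lia.
    apply Cmult_neq_0; [apply pow2_add_1_neq_0 | apply IH; pose proof (pow2_ge_1 K); lia].
Qed.

Definition tm_term (n : nat) : C := tm_sign n / p_poly n z.

Fixpoint psum (N : nat) : C :=
  match N with
  | O => 0
  | S N => psum N + tm_term N
  end.

Definition dyadic_factor (K : nat) : C := - / (1 + z ^ (2 ^ K)).

Lemma tm_term_add_pow2 (K m : nat) : (m < 2 ^ K)%nat ->
  tm_term (m + 2 ^ K) = dyadic_factor K * tm_term m.
Proof.
  intros Hm. unfold tm_term, dyadic_factor.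
  rewrite p_poly_add_pow2, tm_sign_add_pow2 by exact Hm.
  field. split; [apply p_poly_neq_0 | apply pow2_add_1_neq_0].
Qed.

Lemma psum_add_pow2 (K m : nat) : (m <= 2 ^ K)%nat ->
  psum (2 ^ K + m) = psum (2 ^ K) + dyadic_factor K * psum m.
Proof.
  induction m as [|m IH]; intros Hm.
  - rewrite Nat.add_0_r. simpl. ring.
  - rewrite Nat.add_succ_r. simpl. rewrite IH by lia.
    rewrite Nat.add_comm, tm_term_add_pow2 by lia. ring.
Qed.

Lemma sum_n_tm_term (n : nat) : sum_n tm_term n = psum (S n).
Proof.
  induction n as [|n IH].
  - rewrite sum_O. simpl. ring.
  - rewrite sum_Sn, IH. reflexivity.
Qed.

Lemma psum_1 : psum 1 = 1.
Proof. unfold psum, tm_term, tm_sign, p_poly. rewrite sum_O. simpl. field. Qed.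

(* The blocks of length [2^K] telescope: [psum (2^(K+1)) = psum (2^K) * w / (1 + w)]
   with [w = z^(2^K)]. *)
Lemma psum_pow2 (K : nat) :
  psum (2 ^ K) = (1 - / z) * (z ^ (2 ^ K) / (z ^ (2 ^ K) - 1)).
Proof.
  assert (Hz : z <> 0) by (apply Cmod_gt_0_neq_0; lra).
  induction K as [|K IH].
  - pose proof (pow2_sub_1_neq_0 0) as H. change (2 ^ 0)%nat with 1%nat in *. rewrite psum_1.
    replace (z ^ 1) with z in * by ring. field. now split.
  - rewrite Nat.pow_succ_r'. replace (2 * 2 ^ K)%nat with (2 ^ K + 2 ^ K)%nat by lia.
    rewrite psum_add_pow2, IH by lia. unfold dyadic_factor. rewrite Cpow_add_r.
    pose proof (pow2_sub_1_neq_0 K). pose proof (pow2_add_1_neq_0 K).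
    assert (z ^ 2 ^ K * z ^ 2 ^ K - 1 <> 0).
    { replace (z ^ 2 ^ K * z ^ 2 ^ K - 1) with ((z ^ 2 ^ K - 1) * (1 + z ^ 2 ^ K)) by ring.
      now apply Cmult_neq_0. }
    field. repeat split; assumption.
Qed.

Lemma Cmod_dyadic_factor_le (K : nat) :
  (Cmod (dyadic_factor K) <= / (Cmod z - 1) / 2 ^ K)%R.
Proof.
  unfold dyadic_factor. rewrite Cmod_opp, Cmod_inv by apply pow2_add_1_neq_0.
  pose proof (pow2R_pos K).
  replace (/ (Cmod z - 1) / 2 ^ K)%R with (/ (2 ^ K * (Cmod z - 1)))%R
    by (field; split; lra).
  apply Rinv_le_contravar; [apply dyadic_gap_pos | apply Cmod_pow2_pm1_ge].
Qed.

(* Each doubling of the range multiplies the bound by at most [1 + d / 2^K <= exp (d / 2^K)],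
   and [sum_K d / 2^K < 2 d]. *)
Lemma psum_bound_pow2 (K N : nat) : (N <= 2 ^ K)%nat ->
  (Cmod (psum N) <= exp (2 * / (Cmod z - 1) - 2 * / (Cmod z - 1) / 2 ^ K))%R.
Proof.
  set (d := (/ (Cmod z - 1))%R).
  assert (Hd : (0 < d)%R) by (apply Rinv_0_lt_compat; lra).
  revert N. induction K as [|K IH]; intros N HN.
  - replace (2 * d - 2 * d / 2 ^ 0)%R with 0%R by (simpl; field). rewrite exp_0.
    simpl in HN. destruct N as [|[|N]]; try lia.
    + simpl. rewrite Cmod_0. lra.
    + rewrite psum_1, Cmod_1. lra.
  - set (B := exp (2 * d - 2 * d / 2 ^ K)) in IH |- *.
    pose proof (pow2R_pos K). pose proof (IH (2 ^ K)%nat (le_n _)).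
    assert (HB : (0 <= B)%R) by apply Rlt_le, exp_pos.
    assert (Hx : (0 <= d / 2 ^ K)%R) by (apply Rdiv_le_0_compat; lra).
    assert (Hstep : (B * (1 + d / 2 ^ K) <= exp (2 * d - 2 * d / 2 ^ S K))%R).
    { replace (2 * d - 2 * d / 2 ^ S K)%R with (2 * d - 2 * d / 2 ^ K + d / 2 ^ K)%R
        by (simpl; field; lra).
      rewrite exp_plus. apply Rmult_le_compat_l; [exact HB | apply exp_ineq1_le]. }
    eapply Rle_trans; [|exact Hstep].
    destruct (Nat.le_gt_cases N (2 ^ K)) as [Hle | Hgt].
    + specialize (IH N Hle). nra.
    + rewrite Nat.pow_succ_r' in HN. replace N with (2 ^ K + (N - 2 ^ K))%nat by lia.
      rewrite psum_add_pow2 by lia.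
      eapply Rle_trans; [apply Cmod_triangle|]. rewrite Cmod_mult.
      pose proof (IH (N - 2 ^ K)%nat ltac:(lia)).
      pose proof (Cmod_dyadic_factor_le K).
      assert (Cmod (dyadic_factor K) * Cmod (psum (N - 2 ^ K)) <= d / 2 ^ K * B)%R
        by (apply Rmult_le_compat; auto using Cmod_ge_0).
      nra.
Qed.

Lemma psum_bounded (N : nat) : (Cmod (psum N) <= exp (2 * / (Cmod z - 1)))%R.
Proof.
  eapply Rle_trans; [apply (psum_bound_pow2 N), Nat.lt_le_incl, Nat.pow_gt_lin_r; lia|].
  apply exp_le_compat.
  assert (0 <= 2 * / (Cmod z - 1) / 2 ^ N)%R.
  { apply Rdiv_le_0_compat; [|apply pow2R_pos].
    assert (0 < / (Cmod z - 1))%R by (apply Rinv_0_lt_compat; lra). lra. }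
  lra.
Qed.

Lemma psum_error_dyadic (K N : nat) : (2 ^ K <= N <= 2 ^ S K)%nat ->
  (Cmod (psum N - (1 - / z)) <=
     (2 * / (Cmod z - 1) + / (Cmod z - 1) * exp (2 * / (Cmod z - 1))) / 2 ^ K)%R.
Proof.
  intros HN. set (d := (/ (Cmod z - 1))%R). set (w := z ^ 2 ^ K).
  assert (Hz : z <> 0) by (apply Cmod_gt_0_neq_0; lra).
  pose proof (pow2R_pos K). pose proof (pow2_sub_1_neq_0 K) as Hw0.
  rewrite Nat.pow_succ_r' in HN. replace N with (2 ^ K + (N - 2 ^ K))%nat by lia.
  rewrite psum_add_pow2, psum_pow2 by lia. fold w in Hw0 |- *.
  replace ((1 - / z) * (w / (w - 1)) + dyadic_factor K * psum (N - 2 ^ K) - (1 - / z))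
    with ((1 - / z) / (w - 1) + dyadic_factor K * psum (N - 2 ^ K)) by (field; now split).
  eapply Rle_trans; [apply Cmod_triangle|]. rewrite Cmod_mult, Cmod_div by exact Hw0.
  assert (Hhead : (Cmod (1 - / z) / Cmod (w - 1) <= 2 * d / 2 ^ K)%R).
  { replace (2 * d / 2 ^ K)%R with (2 * / (2 ^ K * (Cmod z - 1)))%R
      by (unfold d; field; split; lra).
    pose proof (dyadic_gap_pos K). destruct (Cmod_pow2_pm1_ge K) as [_ Hw]. fold w in Hw.
    apply Rmult_le_compat; [apply Cmod_ge_0 | left; apply Rinv_0_lt_compat; lra
      | now apply Cmod_1_sub_inv_le | apply Rinv_le_contravar; lra]. }
  assert (Htail : (Cmod (dyadic_factor K) * Cmod (psum (N - 2 ^ K)) <= d / 2 ^ K * exp (2 * d))%R)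
    by (apply Rmult_le_compat; auto using Cmod_ge_0, Cmod_dyadic_factor_le, psum_bounded).
  replace ((2 * d + d * exp (2 * d)) / 2 ^ K)%R with (2 * d / 2 ^ K + d / 2 ^ K * exp (2 * d))%R
    by (field; lra).
  lra.
Qed.

Lemma psum_error (K N : nat) : (2 ^ K <= N)%nat ->
  (Cmod (psum N - (1 - / z)) <=
     (2 * / (Cmod z - 1) + / (Cmod z - 1) * exp (2 * / (Cmod z - 1))) / 2 ^ K)%R.
Proof.
  intros HN. pose proof (pow2_ge_1 K).
  destruct (Nat.log2_spec N) as [Hlo Hhi]; [lia|].
  assert (HK : (K <= Nat.log2 N)%nat) by (apply Nat.log2_le_pow2; lia).
  eapply Rle_trans; [apply (psum_error_dyadic (Nat.log2 N)); lia|].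
  apply Rmult_le_compat_l.
  - assert (0 < / (Cmod z - 1))%R by (apply Rinv_0_lt_compat; lra).
    pose proof (exp_pos (2 * / (Cmod z - 1))). nra.
  - apply Rinv_le_contravar; [apply pow2R_pos | apply Rle_pow; [lra | exact HK]].
Qed.

End Estimates.

Lemma is_series_dyadic_rate (a : nat -> C) (l : C) (c : R) :
  (forall K n, (2 ^ K <= n)%nat -> (Cmod (sum_n a n - l) <= c / 2 ^ K)%R) ->
  is_series a l.
Proof.
  intros Hu. apply filterlim_locally. intros eps.
  destruct (INR_unbounded (c / eps)) as [K HK].
  assert (HK2 : (INR K < 2 ^ K)%R).
  { replace 2%R with (INR 2) by reflexivity. rewrite <- pow_INR.
    apply lt_INR, Nat.pow_gt_lin_r. lia. }
  exists (2 ^ K)%nat. intros n Hn. apply norm_compat1.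
  change (Cmod (sum_n a n - l) < eps)%R.
  eapply Rle_lt_trans; [exact (Hu K n Hn)|].
  pose proof (cond_pos eps). pose proof (pow2R_pos K).
  apply Rlt_div_l; [lra|]. apply Rlt_div_l in HK; nra.
Qed.

Theorem mainTheorem15 (z : C) (hz : (1 < Cmod z)%R) :
  is_series (fun n : nat => tm_sign n / p_poly n z) (1 - / z).
Proof.
  eapply is_series_dyadic_rate. intros K n Hn.
  rewrite (sum_n_tm_term z). apply psum_error; [exact hz | lia].
Qed.
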